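(* Let $N>0$ be an integer. Then, as formal power series in $X,Y,Z$, \[ \Phi_0^{(N)}\left(X,Y,Z;\frac{N}{N-Y}\right) =\sum_{k,q,h>0}X^{k-q-h}Y^{q-h}Z^{h-1}\sum_{({\boldsymbol{k}};l)\in \tilde{I}_0(k,q,h)}\tilde{\zeta}^{(N)}({\boldsymbol{k}};l). \]
   Context: $(x)_m=x(x+1)\cdots(x+m-1)$ is the rising factorial, $(x)_0=1$. For ${\boldsymbol{k}}=(k_1,\ldots,k_r)\in\mathbb{Z}_{>0}^r$, $\mathrm{Li}_{\boldsymbol{k}}^{(N)}(z)=\sum_{0<m_1<\cdots<m_r<N}\frac{1}{m_1^{k_1}\cdots m_r^{k_r}}\frac{(N-m_r)_{m_r}}{(Nz^{-1}-m_r)_{m_r}}$. For integers $k,r,h>0$ let $I_0(k,r,h)$ be the set of $(k_1,\ldots,k_r)\in\mathbb{Z}_{>0}^r$ with $k_r>1$, $k_1+\cdots+k_r=k$, $\#\{i\mid k_i>1\}=h$; $G_0^{(N)}(k,r,h;z)=\sum_{{\boldsymbol{k}}\in I_0(k,r,h)}\mathrm{Li}^{(N)}_{\boldsymbol{k}}(z)$ and $\Phi_0^{(N)}(X,Y,Z;z)=\sum_{k,r,h>0}G^{(N)}_0(k,r,h;z)X^{k-r-h}Y^{r-h}Z^{h-1}$; with $z=N/(N-Y)$ the factor $1/(N-Y-m)_m$ is expanded as a power series in $Y$. For $(k_1,\ldots,k_r)\in\mathbb{Z}_{>0}^r$ and integer $l\ge0$, \[ \tilde{\zeta}^{(N)}(k_1,\ldots,k_r;l)=\sum_{0<m_1<\cdots<m_r<N}\frac{1}{m_1^{k_1}\cdots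 m_r^{k_r}}\sum_{0<n_1\le\cdots\le n_l\le m_r}\frac{1}{(N-n_1)\cdots(N-n_l)} \] (the inner sum is $1$ when $l=0$), and $\tilde{I}_0(k,q,h)$ is the set of $(k_1,\ldots,k_r;l)\in\mathbb{Z}_{>0}^r\times\mathbb{Z}_{\ge0}$ with $r>0$, $k_r>1$, $k_1+\cdots+k_r+l=k$, $r+l=q$, $\#\{i\mid k_i>1\}=h$. *)

From HB Require Import structures.
From mathcomp Require Import all_boot all_order all_algebra.
Set Implicit Arguments. Unset Strict Implicit. Unset Printing Implicit Defensive.
Import Order.TTheory GRing.Theory Num.Theory.
Local Open Scope ring_scope.

(* A power series is its coefficient sequence: f n = [Y^n] f. *)
Definition fps := nat -> rat.

Definition fps_of_poly (p : {poly rat}) : fps := fun n => p`_n.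

Definition fps_mul (f g : fps) : fps :=
  fun n => \sum_(i < n.+1) f i * g (n - i)%N.

Fixpoint fps_inv_seq (f : fps) (n : nat) : seq rat :=
  match n with
  | 0 => [:: (f 0%N)^-1]
  | n'.+1 => let s := fps_inv_seq f n' in
      rcons s (- (f 0%N)^-1 * \sum_(i < n'.+1) f i.+1 * nth 0 s (n' - i)%N)
  end.

Definition fps_inv (f : fps) : fps := fun n => nth 0 (fps_inv_seq f n) n.

Definition rising {R : nzRingType} (x : R) (m : nat) : R :=
  \prod_(j < m) (x + j%:R).

Definition hweight (ks ms : seq nat) : rat :=
  \prod_(i < size ks) ((nth 0%N ms i)%:R ^+ nth 0%N ks i)^-1.

(* Li^{(N)}_{ks}(z) at z = N/(N-Y), i.e. N z^{-1} = N - Y, as a power series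
   in Y: the factor 1/(N - Y - m_r)_{m_r} is the power-series inverse of the
   polynomial (N - Y - m_r)_{m_r}. *)
Definition LiY (N : nat) (ks : seq nat) : fps := fun j =>
  \sum_(t : (size ks).-tuple 'I_N | path ltn 0%N (map val t))
    let ms := map val t in
    let mr := last 0%N ms in
    hweight ks ms * rising ((N - mr)%N%:R : rat) mr *
    fps_inv (fps_of_poly (rising (N%:R%:P - 'X - mr%:R%:P : {poly rat}) mr)) j.

Definition in_I0 (k r h : nat) (ks : seq nat) : bool :=
  [&& size ks == r, all (fun x => 0 < x)%N ks, (1 < last 0%N ks)%N,
      sumn ks == k & count (fun x => 1 < x)%N ks == h].

(* G_0^{(N)}(k,r,h; N/(N-Y)) as a power series in Y.  Every element of
   I_0(k,r,h) has entries <= k, so it is enumerated by r-tuples over 'I_k.+1. *)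
Definition G0Y (N k r h : nat) : fps := fun j =>
  \sum_(t : r.-tuple 'I_k.+1 | in_I0 k r h (map val t)) LiY N (map val t) j.

(* Three-variable formal power series: coefficient of X^a Y^b Z^c. *)
Definition fps3 := nat -> nat -> nat -> rat.

(* Phi_0^{(N)}(X,Y,Z; N/(N-Y)) = sum_{k,r,h>0} G_0(k,r,h;N/(N-Y)) X^{k-r-h} Y^{r-h} Z^{h-1}.
   Coefficient of X^a Y^b Z^c: h = c+1, r = h + d (d = r - h <= b),
   k = a + r + h, and the remaining Y^{b-d} is taken from G_0.
   (Terms with k < r + h or r < h vanish since I_0(k,r,h) is empty.) *)
Definition Phi0Y (N : nat) : fps3 := fun a b c =>
  \sum_(d < b.+1) G0Y N (a + (c.+1 + d) + c.+1)%N (c.+1 + d)%N c.+1 (b - d)%N.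

Definition zetat (N : nat) (ks : seq nat) (l : nat) : rat :=
  \sum_(t : (size ks).-tuple 'I_N | path ltn 0%N (map val t))
    let ms := map val t in
    hweight ks ms *
    \sum_(u : l.-tuple 'I_N |
            path leq 1%N (map val u) && all (fun n => n <= last 0%N ms)%N (map val u))
      \prod_(i < l) ((N - nth 0%N (map val u) i)%N%:R)^-1.

Definition in_tI0 (k q h : nat) (ks : seq nat) (l : nat) : bool :=
  [&& (0 < size ks)%N, all (fun x => 0 < x)%N ks, (1 < last 0%N ks)%N,
      sumn ks + l == k, size ks + l == q & count (fun x => 1 < x)%N ks == h].

(* sum_{(ks;l) in tilde I_0(k,q,h)} tilde zeta(ks; l): r = size ks ranges over
   1..q, l = q - r, entries of ks are <= k. *)
Definition tZ0 (N k q h : nat) : rat :=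
  \sum_(r < q.+1)
    \sum_(t : r.-tuple 'I_k.+1 | in_tI0 k q h (map val t) (q - r)%N)
      zetat N (map val t) (q - r)%N.

(* Right-hand side series sum_{k,q,h>0} X^{k-q-h} Y^{q-h} Z^{h-1} tZ0(k,q,h):
   coefficient of X^a Y^b Z^c has h = c+1, q = b + h, k = a + q + h.
   (Terms with k < q + h or q < h vanish since tilde I_0 is then empty.) *)
Definition RHS0 (N : nat) : fps3 := fun a b c =>
  tZ0 N (a + (b + c.+1) + c.+1)%N (b + c.+1)%N c.+1.

From HB Require Import structures.
From mathcomp Require Import all_boot all_order all_algebra.
From mathcomp Require Import ring zify.
From Stdlib Require Import FunctionalExtensionality.
Set Implicit Arguments. Unset Strict Implicit. Unset Printing Implicit Defensive.
Import Order.TTheory GRing.Theory Num.Theory.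
Local Open Scope ring_scope.

(* For m < N, (N-m)_m / (N-Y-m)_m = prod_(n = 1..m) (1 - Y/(N-n))^-1, whose coefficient of
   Y^l is the complete homogeneous sum h_l(1/(N-1), ..., 1/(N-m)), i.e. the sum over
   0 < n_1 <= ... <= n_l <= m of prod_i 1/(N-n_i).  Hence the coefficient of Y^l in
   Li^(N)_k(N/(N-Y)) is zeta~^(N)(k; l), and comparing the coefficients of X^a Y^b Z^c
   on both sides is the reindexing (k, r, h; l) |-> (k + l, r + l, h). *)

Lemma size_fps_inv_seq f n : size (fps_inv_seq f n) = n.+1.
Proof. by elim: n => [|n IH] //=; rewrite size_rcons IH. Qed.

Lemma nth_fps_inv_seq f n k : (k <= n)%N -> nth 0 (fps_inv_seq f n) k = fps_inv f k.
Proof.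
elim: n => [|n IH]; first by rewrite leqn0 => /eqP ->.
rewrite leq_eqVlt => /orP [/eqP -> //| hk].
by rewrite /= nth_rcons size_fps_inv_seq hk IH.
Qed.

Lemma fps_invS f n : fps_inv f n.+1 =
  - (f 0%N)^-1 * \sum_(i < n.+1) f i.+1 * fps_inv f (n - i)%N.
Proof.
rewrite /fps_inv /= nth_rcons size_fps_inv_seq ltnn eqxx.
congr (_ * _); apply: eq_bigr => i _.
by rewrite nth_fps_inv_seq // leq_subr.
Qed.

Lemma fps_inv_unique f g : f 0%N != 0 ->
  (forall n, fps_mul f g n = (n == 0%N)%:R) -> fps_inv f =1 g.
Proof.
move=> f0 fg1 n; elim: n {-2}n (leqnn n) => [|n IH] k.
  rewrite leqn0 => /eqP ->; have := fg1 0%N.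
  rewrite /fps_mul big_ord1 subnn /= => fg0.
  by rewrite /fps_inv /= -[g 0%N](mulKf f0) fg0 mulr1.
rewrite leq_eqVlt => /orP [/eqP ->|]; last exact: IH.
have := fg1 n.+1; rewrite /fps_mul big_ord_recl /= subn0.
move/eqP; rewrite addrC addr_eq0 => /eqP fgS.
rewrite fps_invS; under eq_bigr => i _ do rewrite IH ?leq_subr //.
by rewrite fgS mulrN mulNr opprK mulKf.
Qed.

Lemma fps_mulZr f g a n :
  fps_mul f (fun k => a * g k) n = a * fps_mul f g n.
Proof. by rewrite /fps_mul mulr_sumr; apply: eq_bigr => i _; rewrite mulrCA. Qed.

Lemma fps_mul_linear_factor a p g g' n :
  (forall k, a * g k - (if k is k'.+1 then g k' else 0) = g' k) ->
  fps_mul (fps_of_poly ((a%:P - 'X) * p)) g n = fps_mul (fps_of_poly p) g' n.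
Proof.
move=> gg'; rewrite /fps_mul /fps_of_poly.
under eq_bigr => i _ do rewrite mulrBl coefB coefCM coefXM mulrBl.
under [RHS]eq_bigr => i _ do rewrite -gg' mulrBr mulrCA.
rewrite !sumrB; congr (_ - _); first by apply: eq_bigr => i _; rewrite mulrA.
rewrite big_ord_recl /= mul0r add0r big_ord_recr /= subnn mulr0 addr0.
apply: eq_bigr => i _; rewrite /bump /= add1n.
by have -> : (n - i = (n - i.+1).+1)%N by have := ltn_ord i; lia.
Qed.

Definition inv_gap (N n : nat) : rat := ((N - n)%N%:R)^-1.

(* [hcomplete N j m] is the complete homogeneous symmetric polynomial of degree [j]
   in [inv_gap N 1, ..., inv_gap N m], split according to its largest index. *)
Fixpoint hcomplete (N j m : nat) : rat :=
  if j is j'.+1 then \sum_(x < N | (1 <= x <= m)%N) inv_gap N x * hcomplete N j' x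
  else 1.

Lemma hcompleteS0 N j : hcomplete N j.+1 0 = 0.
Proof. by rewrite /= big_pred0 // => x; rewrite leqn0 andbC; case: (x : nat). Qed.

Lemma hcompleteSS N j m : (m.+1 < N)%N ->
  hcomplete N j.+1 m.+1 = hcomplete N j.+1 m + inv_gap N m.+1 * hcomplete N j m.+1.
Proof.
move=> hm /=; rewrite (bigD1 (Ordinal hm)) //= addrC; congr (_ + _).
by apply: eq_bigl => x; rewrite -val_eqE /=; apply/idP/idP; lia.
Qed.

Lemma hcomplete_step N k m : (m.+1 < N)%N ->
  (N - m.+1)%N%:R * hcomplete N k m.+1
    - (if k is k'.+1 then hcomplete N k' m.+1 else 0)
  = (N - m.+1)%N%:R * hcomplete N k m.
Proof.
move=> hm; case: k => [|k]; first by rewrite subr0.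
rewrite hcompleteSS // mulrDr mulrA /inv_gap mulfV ?mul1r ?addrK //.
by rewrite pnatr_eq0; lia.
Qed.

Definition Li_num (N m : nat) : rat := rising ((N - m)%N%:R) m.
Definition Li_den (N m : nat) : {poly rat} := rising (N%:R%:P - 'X - m%:R%:P) m.

Lemma Li_numS N m : (m.+1 <= N)%N -> Li_num N m.+1 = (N - m.+1)%N%:R * Li_num N m.
Proof.
move=> hm; rewrite /Li_num /rising big_ord_recl /= addr0; congr (_ * _).
by apply: eq_bigr => i _; rewrite /bump /= add1n -!natrD; congr (_%:R); lia.
Qed.

Lemma Li_denS N m : (m.+1 <= N)%N ->
  Li_den N m.+1 = ((N - m.+1)%N%:R%:P - 'X) * Li_den N m.
Proof.
move=> hm; rewrite /Li_den /rising big_ord_recl /= addr0; congr (_ * _).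
  by rewrite natrB // polyCB; ring.
apply: eq_bigr => i _; rewrite /bump /= add1n !polyC_natr -(natr1 m) -(natr1 i); ring.
Qed.

Lemma Li_num_neq0 N m : (m < N)%N -> Li_num N m != 0.
Proof.
move=> hm; apply/prodf_neq0 => i _.
by rewrite -natrD pnatr_eq0; lia.
Qed.

Lemma Li_den_mul_hcomplete N m n : (m < N)%N ->
  fps_mul (fps_of_poly (Li_den N m)) (fun j => hcomplete N j m) n =
  (n == 0%N)%:R * Li_num N m.
Proof.
elim: m n => [|m IH] n hm.
  rewrite /fps_mul /fps_of_poly /Li_den /Li_num /rising !big_ord0 mulr1.
  case: n => [|n]; first by rewrite big_ord1 coefC /= mulr1.
  rewrite big_ord_recl hcompleteS0 mulr0 add0r big1 // => i _.
  by rewrite coefC /= mul0r.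
have hm' : (m < N)%N by exact: ltnW.
rewrite Li_denS //.
have -> := fps_mul_linear_factor (Li_den N m) n (fun k => hcomplete_step k hm).
by rewrite fps_mulZr IH // Li_numS //; ring.
Qed.

Lemma Li_ratio_coef N m j : (m < N)%N ->
  Li_num N m * fps_inv (fps_of_poly (Li_den N m)) j = hcomplete N j m.
Proof.
move=> hm; have num0 := Li_num_neq0 hm.
have den0 : fps_of_poly (Li_den N m) 0%N = Li_num N m.
  by have := Li_den_mul_hcomplete 0 hm; rewrite /fps_mul big_ord1 subnn mulr1 mul1r.
rewrite (@fps_inv_unique _ (fun j => (Li_num N m)^-1 * hcomplete N j m)) ?den0.
- by rewrite mulVKf.
- exact: num0.
- by move=> n; rewrite fps_mulZr Li_den_mul_hcomplete // mulrCA mulVf // mulr1.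
Qed.

Lemma sum_tuple_cons (R : nmodType) (T : finType) j (P : pred (seq T)) (F : seq T -> R) :
  \sum_(u : j.+1.-tuple T | P u) F u =
  \sum_(x : T) \sum_(t : j.-tuple T | P (x :: t)) F (x :: t).
Proof.
rewrite pair_big_dep /=.
rewrite (reindex (fun p : T * j.-tuple T => cons_tuple p.1 p.2)) //=.
exists (fun u : j.+1.-tuple T => (thead u, behead_tuple u)).
  by move=> [x t] _ /=; congr (_, _); apply: val_inj.
by move=> u _; apply: val_inj => /=; rewrite [in RHS](tuple_eta u).
Qed.

Lemma rev_tuple_inj (T : Type) j : injective (@rev_tuple j T).
Proof. by move=> u v /(congr1 val) /= /(can_inj revK) uv; apply: val_inj. Qed.

Lemma geq_trans : transitive geq.
Proof. by move=> a b c /= ba cb; apply: leq_trans ba. Qed.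

Lemma hcomplete_nonincr N j m :
  hcomplete N j m =
  \sum_(u : j.-tuple 'I_N | path geq m (map val u) && all (leq 1) (map val u))
     \prod_(x <- map val u) inv_gap N x.
Proof.
elim: j m => [|j IH] m.
  rewrite (big_pred1 [tuple]) ?big_nil // => u.
  by rewrite tuple0; apply/esym/eqP.
rewrite (sum_tuple_cons j (fun s => path geq m (map val s) && all (leq 1) (map val s))
  (fun s => \prod_(x <- map val s) inv_gap N x)) /=.
rewrite [RHS](bigID (fun x : 'I_N => (1 <= x <= m)%N)) /= [X in _ + X]big1 ?addr0.
  apply: eq_bigr => x /andP [x1 xm].
  rewrite IH mulr_sumr; apply: eq_big => [t|t _]; first by rewrite x1 xm.
  by rewrite big_cons.
move=> x xm; rewrite big_pred0 // => t /=.
by apply/negP => /and3P [/andP [x_le _] x1 _]; rewrite x1 x_le in xm.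
Qed.

Lemma hcomplete_nondecr N m l :
  hcomplete N l m =
  \sum_(u : l.-tuple 'I_N | path leq 1 (map val u) && all (fun n => n <= m)%N (map val u))
     \prod_(i < l) ((N - nth 0%N (map val u) i)%N%:R)^-1.
Proof.
rewrite hcomplete_nonincr (reindex_inj (@rev_tuple_inj 'I_N l)).
apply: eq_big => [u|u _] /=.
  rewrite map_rev (path_sortedE geq_trans) (path_sortedE leq_trans).
  rewrite !all_rev rev_sorted.
  by case: (all (leq 1) _); case: (all (fun x => x <= m)%N _); case: (sorted _ _).
by rewrite map_rev big_rev (big_nth 0%N) big_mkord size_map size_tuple.
Qed.

Lemma LiY_zetat N ks j : (0 < N)%N -> LiY N ks j = zetat N ks j.
Proof.
move=> hN; apply: eq_bigr => t _ /=; rewrite -mulrA; congr (_ * _).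
have lastN : (last 0%N (map val t) < N)%N.
  have := mem_last 0%N (map val t); rewrite inE => /orP [/eqP -> //|].
  by case/mapP => x _ ->; apply: ltn_ord.
by rewrite (Li_ratio_coef j lastN) hcomplete_nondecr.
Qed.

Lemma all_leq_sumn (s : seq nat) : all (fun x => x <= sumn s)%N s.
Proof.
elim: s => //= x s IH; rewrite leq_addr /=.
by apply: sub_all IH => y yle; apply: leq_trans yle (leq_addl _ _).
Qed.

Lemma sum_tuple_widen (R : nmodType) r k1 k2 (P : pred (seq nat)) (F : seq nat -> R) :
  (k1 <= k2)%N -> (forall s, P s -> all (fun x => x <= k1)%N s) ->
  \sum_(t : r.-tuple 'I_k1.+1 | P (map val t)) F (map val t) =
  \sum_(t : r.-tuple 'I_k2.+1 | P (map val t)) F (map val t).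
Proof.
move=> k12 Pk1; have k12S : (k1.+1 <= k2.+1)%N by [].
have val_widen (t : r.-tuple 'I_k1.+1) : map val (map_tuple (widen_ord k12S) t) = map val t.
  by rewrite /= -map_comp.
rewrite [RHS](reindex_onto (fun t : r.-tuple 'I_k1.+1 => map_tuple (widen_ord k12S) t)
   (fun t : r.-tuple 'I_k2.+1 => map_tuple (fun x : 'I_k2.+1 => inord (val x) : 'I_k1.+1) t)).
  apply: eq_big => [t|t _]; last by rewrite val_widen.
  rewrite val_widen; case: (P _) => //=; apply/esym/eqP/val_inj => /=.
  rewrite -map_comp -[RHS]map_id; apply: eq_map => x /=.
  by apply: val_inj; rewrite /= inordK.
move=> t /Pk1; rewrite all_map => /allP tk1; apply: val_inj => /=.
rewrite -map_comp -[RHS]map_id; apply/eq_in_map => x xt /=.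
by apply: val_inj; rewrite /= inordK // ltnS; apply: tk1.
Qed.

Lemma G0Y_zetat N k r h j : (0 < N)%N ->
  G0Y N k r h j =
  \sum_(t : r.-tuple 'I_k.+1 | in_I0 k r h (map val t)) zetat N (map val t) j.
Proof. by move=> hN; apply: eq_bigr => t _; rewrite LiY_zetat. Qed.

Lemma in_tI0_in_I0 k k' q r h l ks : size ks = r -> (r + l = q)%N -> (k' + l = k)%N ->
  in_tI0 k q h ks l = (0 < r)%N && in_I0 k' r h ks.
Proof. by move=> <- <- <-; rewrite /in_tI0 /in_I0 !eqxx eqn_add2r. Qed.

Lemma tZ0_shift N k n h :
  tZ0 N k (n + h)%N h =
  \sum_(d < n.+1) \sum_(t : (h + d)%N.-tuple 'I_k.+1 | in_tI0 k (n + h) h (map val t) (n - d))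
     zetat N (map val t) (n - d)%N.
Proof.
pose F r := \sum_(t : r.-tuple 'I_k.+1 | in_tI0 k (n + h) h (map val t) (n + h - r))
  zetat N (map val t) (n + h - r).
rewrite /tZ0 -/(\sum_(r < (n + h).+1) F r) -(big_mkord xpredT F).
rewrite (big_cat_nat _ (n := h)) //=; last exact/leqW/leq_addl.
rewrite [X in X + _]big1_seq ?add0r; last first.
  (* an [r]-tuple has at most [r] entries exceeding 1 *)
  move=> r; rewrite mem_index_iota => /andP [_ rh].
  rewrite /F big_pred0 // => t; apply/negP => /and5P [_ _ _ _ /andP [_ /eqP hc]].
  have := count_size (fun x => 1 < x)%N (map val t).
  by rewrite hc size_map size_tuple; lia.
rewrite -[X in index_iota X _]add0n big_addn subSn ?leq_addl // addnK big_mkord.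
apply: eq_bigr => d _; rewrite /F addnC.
by have -> : (n + h - (h + d) = n - d)%N by rewrite [(h + d)%N]addnC subnDr.
Qed.

Theorem proposition5p4 (N : nat) (hN : (0 < N)%N) : Phi0Y N = RHS0 N.
Proof.
apply: functional_extensionality => a; apply: functional_extensionality => b.
apply: functional_extensionality => c.
rewrite /Phi0Y /RHS0 tZ0_shift; apply: eq_bigr => d _.
have d_le_b : (d <= b)%N by rewrite -ltnS.
rewrite G0Y_zetat // (@sum_tuple_widen _ _ _ (a + (b + c.+1) + c.+1)
  (in_I0 (a + (c.+1 + d) + c.+1) (c.+1 + d) c.+1) (zetat N ^~ (b - d)%N)).
- apply: eq_bigl => t.
  by rewrite (@in_tI0_in_I0 _ (a + (c.+1 + d) + c.+1) _ (c.+1 + d)) ?size_map ?size_tuple //; lia.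
- lia.
- by move=> s /and5P [_ _ _ /eqP <- _]; apply: all_leq_sumn.
Qed.
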